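(* Let $\mathbf x_1,\dots,\mathbf x_l\in\mathbb{R}^n$, $y_1,\dots,y_l\in\mathbb{R}$, let $\mathbf X\in\mathbb{R}^{l\times n}$ have $i$-th row $\mathbf x_i^T$ and $\mathbf y=(y_1,\dots,y_l)^T$. For $C>0$ let $\mathbf w^*(C)$ be the optimal solution of the least absolute deviations problem $$\min_{\mathbf w}\tfrac12\|\mathbf w\|^2+C\sum_{i=1}^l|y_i-\mathbf w^T\mathbf x_i|,$$ and $\theta^*(C)$ an optimal solution of its dual $\min_{\theta\in[-1,1]^l}\frac C2\|\mathbf X^T\theta\|^2-\langle\mathbf y,\theta\rangle$. Let $0<C_1<\dots<C_{\mathcal K}$ and suppose $\mathbf w^*(C_k)$ is known for some integer $1\le k<\mathcal K$. Then $[\theta^*(C_{k+1})]_i=-1$ (i.e., $i\in\mathcal R$) if $$\tfrac{C_{k+1}+C_k}{2C_k}\langle\mathbf w^*(C_k),\mathbf x_i\rangle-\tfrac{C_{k+1}-C_k}{2C_k}\|\mathbf w^*(C_k)\|\,\|\mathbf x_i\|>y_i,$$ and $[\theta^*(C_{k+1})]_i=1$ (i.e., $i\in\mathcal L$) if $$\tfrac{C_{k+1}+C_k}{2C_k}\langle\mathbf w^*(C_k),\mathbf x_i\rangle+\tfrac{C_{k+1}-C_k}{2C_k}\|\mathbf w^*(C_k)\|\,\|\mathbf x_i\|<y_i.$$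
   Context: Primal and dual solutions satisfy $\mathbf w^*(C)=C\mathbf X^T\theta^*(C)$. At parameter $C=C_{k+1}$: $\mathcal R=\{i:\langle\mathbf w^*(C),\mathbf x_i\rangle>y_i\}$ and $\mathcal L=\{i:\langle\mathbf w^*(C),\mathbf x_i\rangle<y_i\}$. *)

From HB Require Import structures.
From mathcomp Require Import all_boot all_order all_algebra.
From mathcomp Require Import reals.
Set Implicit Arguments. Unset Strict Implicit. Unset Printing Implicit Defensive.
Import Order.TTheory GRing.Theory Num.Theory.
Local Open Scope ring_scope.

Section LAD.
Variables (R : realType) (l n : nat).

Definition dotv (u v : 'I_n -> R) : R := \sum_(j < n) u j * v j.
Definition normv (u : 'I_n -> R) : R := Num.sqrt (dotv u u).

(* X^T theta, where X has i-th row x_i^T *)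
Definition XT (x : 'I_l -> 'I_n -> R) (theta : 'I_l -> R) : 'I_n -> R :=
  fun j => \sum_(i < l) theta i * x i j.

Definition lad_primal (x : 'I_l -> 'I_n -> R) (y : 'I_l -> R) (C : R)
  (w : 'I_n -> R) : R :=
  2^-1 * dotv w w + C * \sum_(i < l) `|y i - dotv w (x i)|.

Definition primal_opt x y C (w : 'I_n -> R) : Prop :=
  forall w', lad_primal x y C w <= lad_primal x y C w'.

Definition lad_dual (x : 'I_l -> 'I_n -> R) (y : 'I_l -> R) (C : R)
  (theta : 'I_l -> R) : R :=
  C / 2 * dotv (XT x theta) (XT x theta) - \sum_(i < l) y i * theta i.

Definition dual_feasible (theta : 'I_l -> R) : Prop :=
  forall i, -1 <= theta i <= 1.

Definition dual_opt x y C (theta : 'I_l -> R) : Prop :=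
  dual_feasible theta /\
  forall theta', dual_feasible theta' -> lad_dual x y C theta <= lad_dual x y C theta'.

End LAD.

From HB Require Import structures.
From mathcomp Require Import all_boot all_order all_algebra.
From mathcomp Require Import reals.
From mathcomp Require Import lra ring.
Set Implicit Arguments. Unset Strict Implicit. Unset Printing Implicit Defensive.
Import Order.TTheory GRing.Theory Num.Theory.
Local Open Scope ring_scope.

(* Both optimality conditions are first-order: moving from an optimum towards
   any admissible point along a segment cannot decrease the objective.  For the
   dual problem at [C'] this gives the sign of every [theta_i], and shows that
   [u := C' X^T theta] (the primal solution at [C']) satisfies
   [C (C' <X^T theta, X^T theta> - <w, X^T theta>) <= C' <w, X^T theta> - <w, w>]
   once combined with the primal optimality of [w] at [C] tested against [u].
   That inequality says exactly that [u] lies in the ball of centre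
   [(C' + C) / (2 C) w] and radius [(C' - C) / (2 C) ||w||], and Cauchy-Schwarz
   then bounds [<u, x_i>] on both sides. *)

Lemma ge0_of_quadratic_ge0 (R : realFieldType) (A B : R) :
  (forall t, 0 < t -> t <= 1 -> 0 <= t * A + t ^+ 2 * B) -> 0 <= A.
Proof.
move=> h; rewrite leNgt; apply/negP => A_lt0.
have nB_ge0 := normr_ge0 B.
(* This [t] makes [A + t * `|B| = t * A < 0]. *)
pose t := - A / (`|B| - A).
have t_gt0 : 0 < t by apply: divr_gt0; lra.
have t_le1 : t <= 1 by rewrite ler_pdivrMr; lra.
have tE : t * (`|B| - A) = - A by rewrite divfK // gt_eqF //; lra.
clearbody t.
have tnB : t * `|B| = t * A - A by rewrite mulrBr in tE; lra.
have ttB_le : t * (t * B) <= t * (t * A) - t * A.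
  rewrite -mulrBr -tnB; apply: ler_wpM2l; first exact: ltW.
  by apply: ler_wpM2l; [exact: ltW | exact: ler_norm].
have ttA_lt0 : t * (t * A) < 0 by rewrite !pmulr_rlt0.
by have := h t t_gt0 t_le1; rewrite expr2 -mulrA; lra.
Qed.

Section Dot.
Variables (R : realType) (n : nat).
Implicit Types (u v z : 'I_n -> R) (a t : R).

Lemma eq_dotv u u' v v' : u =1 u' -> v =1 v' -> dotv u v = dotv u' v'.
Proof. by move=> eu ev; apply: eq_bigr => j _; rewrite eu ev. Qed.

Lemma dotvC u v : dotv u v = dotv v u.
Proof. by apply: eq_bigr => j _; rewrite mulrC. Qed.

Lemma dotvDl u v z : dotv (u \+ v) z = dotv u z + dotv v z.
Proof. by rewrite /dotv -big_split; apply: eq_bigr => j _; rewrite /= mulrDl. Qed.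

Lemma dotvBl u v z : dotv (u \- v) z = dotv u z - dotv v z.
Proof. by rewrite /dotv -sumrB; apply: eq_bigr => j _; rewrite /= mulrBl. Qed.

Lemma dotvBr u v z : dotv z (u \- v) = dotv z u - dotv z v.
Proof. by rewrite dotvC dotvBl !(dotvC z). Qed.

Lemma dotvZl a u z : dotv (a \*o u) z = a * dotv u z.
Proof. by rewrite /dotv mulr_sumr; apply: eq_bigr => j _; rewrite /= mulrA. Qed.

Lemma dotvZr a u z : dotv z (a \*o u) = a * dotv z u.
Proof. by rewrite dotvC dotvZl dotvC. Qed.

Lemma dotvv_ge0 u : 0 <= dotv u u.
Proof. by apply: sumr_ge0 => j _; rewrite -expr2 sqr_ge0. Qed.

Lemma dotvv_eq0 u z : dotv u u = 0 -> dotv u z = 0.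
Proof.
move=> /psumr_eq0P u2_eq0; rewrite /dotv big1 // => j _.
have /eqP := u2_eq0 (fun i _ => sqr_ge0 (u i)) j isT.
by rewrite mulf_eq0 orbb => /eqP ->; rewrite mul0r.
Qed.

Lemma normv_ge0 u : 0 <= normv u.
Proof. exact: sqrtr_ge0. Qed.

Lemma sqr_normv u : normv u ^+ 2 = dotv u u.
Proof. by rewrite sqr_sqrtr // dotvv_ge0. Qed.

Lemma normv_le u r : 0 <= r -> dotv u u <= r ^+ 2 -> normv u <= r.
Proof. by move=> r_ge0 /ler_wsqrtr; rewrite sqrtr_sqr ger0_norm. Qed.

Lemma normvN u : normv ((-1) \*o u) = normv u.
Proof. by rewrite /normv dotvZl dotvZr mulrA mulN1r opprK mul1r. Qed.

Lemma dotv_le_normv u v : dotv u v <= normv u * normv v.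
Proof.
set s := normv u; set q := normv v.
have s_ge0 : 0 <= s := normv_ge0 u; have q_ge0 : 0 <= q := normv_ge0 v.
have [qs_gt0|] := ltP 0 (q * s); last first.
  move=> qs_le0; have : s * q = 0 by apply/eqP; rewrite eq_le mulrC qs_le0 mulr_ge0.
  move/eqP; rewrite mulf_eq0 => /orP[] /eqP eq0.
    by rewrite dotvv_eq0 -?sqr_normv -/s ?eq0 ?expr0n ?mul0r.
  by rewrite dotvC dotvv_eq0 -?sqr_normv -/q ?eq0 ?expr0n ?mulr0.
have := dotvv_ge0 (q \*o u \- s \*o v).
rewrite !(dotvBl, dotvBr, dotvZl, dotvZr) (dotvC v u) -!sqr_normv -/s -/q => sq_ge0.
have : 0 <= (q * s) * (q * s - dotv u v) by nra.
by rewrite pmulr_rge0 // subr_ge0 mulrC.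
Qed.

Lemma ler_norm_dotv u v : `|dotv u v| <= normv u * normv v.
Proof.
apply/ler_normlP; split; last exact: dotv_le_normv.
by rewrite -mulN1r -dotvZl -(normvN u) dotv_le_normv.
Qed.

Lemma dotv_segmentl u v z t :
  dotv (u \+ t \*o (v \- u)) z = dotv u z + t * (dotv v z - dotv u z).
Proof. by rewrite dotvDl dotvZl dotvBl. Qed.

Lemma dotv_segment u v t :
  dotv (u \+ t \*o (v \- u)) (u \+ t \*o (v \- u)) =
  dotv u u + t * (2 * (dotv u v - dotv u u)) + t ^+ 2 * dotv (v \- u) (v \- u).
Proof.
rewrite /dotv -!sumrB !mulr_sumr -!big_split /=.
by apply: eq_bigr => j _; ring.
Qed.

End Dot.

Section LeastAbsoluteDeviations.
Variables (R : realType) (l n : nat).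
Variables (x : 'I_l -> 'I_n -> R) (y : 'I_l -> R).
Implicit Types (u v w : 'I_n -> R) (theta : 'I_l -> R) (C t : R).

Definition abs_dev w : R := \sum_(i < l) `|y i - dotv w (x i)|.

Lemma dotv_XT v theta : dotv v (XT x theta) = \sum_(i < l) theta i * dotv v (x i).
Proof.
rewrite /dotv /XT; under eq_bigr do rewrite mulr_sumr.
rewrite exchange_big; apply: eq_bigr => i _; rewrite mulr_sumr.
by apply: eq_bigr => j _; rewrite mulrCA.
Qed.

Lemma XT_segment theta theta' t :
  XT x (theta \+ t \*o (theta' \- theta)) =1 XT x theta \+ t \*o (XT x theta' \- XT x theta).
Proof.
move=> j; rewrite /XT /= -sumrB mulr_sumr -big_split /=.
by apply: eq_bigr => i _; ring.
Qed.

Lemma dual_feasible_segment theta theta' t :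
  dual_feasible theta -> dual_feasible theta' -> 0 <= t <= 1 ->
  dual_feasible (theta \+ t \*o (theta' \- theta)).
Proof.
move=> feas feas' /andP[t_ge0 t_le1] i /=.
by have /andP[? ?] := feas i; have /andP[? ?] := feas' i; apply/andP; split; nra.
Qed.

Lemma lad_dual_segment C theta theta' t :
  lad_dual x y C (theta \+ t \*o (theta' \- theta)) =
  lad_dual x y C theta
  + t * ((C * dotv (XT x theta) (XT x theta') - \sum_(i < l) y i * theta' i)
         - (C * dotv (XT x theta) (XT x theta) - \sum_(i < l) y i * theta i))
  + t ^+ 2 * (C / 2 * dotv (XT x theta' \- XT x theta) (XT x theta' \- XT x theta)).
Proof.
rewrite /lad_dual (eq_dotv (XT_segment _ _ _) (XT_segment _ _ _)) dotv_segment.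
have -> : \sum_(i < l) y i * (theta \+ t \*o (theta' \- theta)) i =
          \sum_(i < l) y i * theta i
          + t * (\sum_(i < l) y i * theta' i - \sum_(i < l) y i * theta i).
  by rewrite -sumrB mulr_sumr -big_split /=; apply: eq_bigr => i _; ring.
by field.
Qed.

Lemma dual_opt_variational C theta theta' :
  dual_opt x y C theta -> dual_feasible theta' ->
  0 <= \sum_(i < l) (theta' i - theta i) * (C * dotv (XT x theta) (x i) - y i).
Proof.
move=> [feas opt] feas'.
have -> : \sum_(i < l) (theta' i - theta i) * (C * dotv (XT x theta) (x i) - y i) =
          (C * dotv (XT x theta) (XT x theta') - \sum_(i < l) y i * theta' i)
          - (C * dotv (XT x theta) (XT x theta) - \sum_(i < l) y i * theta i).
  rewrite !dotv_XT !mulr_sumr -!sumrB; apply: eq_bigr => i _; ring.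
apply: ge0_of_quadratic_ge0 => t t_gt0 t_le1.
have feas_t : dual_feasible (theta \+ t \*o (theta' \- theta)).
  by apply: dual_feasible_segment => //; rewrite ltW.
by move: (opt _ feas_t); rewrite lad_dual_segment -addrA lerDl; apply.
Qed.

Lemma dual_opt_coord C theta i c : dual_opt x y C theta -> -1 <= c -> c <= 1 ->
  0 <= (c - theta i) * (C * dotv (XT x theta) (x i) - y i).
Proof.
move=> opt c_ge c_le; pose theta' j := if j == i then c else theta j.
have feas' : dual_feasible theta'.
  by move=> j; rewrite /theta'; case: eqP => _; [apply/andP | apply: opt.1].
have := dual_opt_variational opt feas'.
rewrite (bigD1 i) //= big1 ?addr0 /theta' ?eqxx // => j /negbTE ->.
by rewrite subrr mul0r.
Qed.

Lemma dual_opt_eqN1 C theta i : dual_opt x y C theta ->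
  y i < C * dotv (XT x theta) (x i) -> theta i = -1.
Proof.
move=> opt margin_gt0; have /andP[lo _] := opt.1 i.
have N1_le1 : -1 <= 1 :> R by lra.
have := dual_opt_coord i opt (lexx _) N1_le1.
rewrite pmulr_lge0 ?subr_gt0 // subr_ge0 => hi.
by apply/eqP; rewrite eq_le hi lo.
Qed.

Lemma dual_opt_eq1 C theta i : dual_opt x y C theta ->
  C * dotv (XT x theta) (x i) < y i -> theta i = 1.
Proof.
move=> opt margin_lt0; have /andP[_ hi] := opt.1 i.
have N1_le1 : -1 <= 1 :> R by lra.
have := dual_opt_coord i opt N1_le1 (lexx _).
rewrite -mulrNN pmulr_lge0 ?oppr_gt0 ?subr_lt0 // oppr_ge0 subr_le0 => lo.
by apply/eqP; rewrite eq_le hi lo.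
Qed.

Lemma abs_dev_dual_opt C theta : dual_opt x y C theta ->
  abs_dev (C \*o XT x theta) <=
  \sum_(i < l) y i * theta i - C * dotv (XT x theta) (XT x theta).
Proof.
move=> opt; set m := fun i => C * dotv (XT x theta) (x i) - y i.
pose sgn i : R := if 0 <= m i then -1 else 1.
have feas_sgn : dual_feasible sgn.
  by move=> i; rewrite /sgn; case: ifP => _; apply/andP; split; lra.
have := dual_opt_variational opt feas_sgn; rewrite -/m.
have -> : \sum_(i < l) (sgn i - theta i) * m i = - abs_dev (C \*o XT x theta)
    - (C * dotv (XT x theta) (XT x theta) - \sum_(i < l) y i * theta i).
  rewrite /abs_dev dotv_XT mulr_sumr -sumrN -!sumrB; apply: eq_bigr => i _.
  have -> : y i - dotv (C \*o XT x theta) (x i) = - m i by rewrite dotvZl /m; ring.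
  rewrite normrN /sgn; case: ifP => [m_ge0 | /negbT]; last rewrite -ltNge => m_lt0.
    by rewrite ger0_norm // /m; ring.
  by rewrite ltr0_norm // /m; ring.
lra.
Qed.

Lemma abs_dev_ge_dual w theta : dual_feasible theta ->
  \sum_(i < l) y i * theta i - dotv w (XT x theta) <= abs_dev w.
Proof.
move=> feas; rewrite dotv_XT -sumrB; apply: ler_sum => i _.
rewrite -mulrC -mulrBr (le_trans (ler_norm _)) // normrM ler_piMl //.
by rewrite ler_norml.
Qed.

Lemma abs_dev_segment_le v w t : 0 <= t -> t <= 1 ->
  abs_dev (w \+ t \*o (v \- w)) <= (1 - t) * abs_dev w + t * abs_dev v.
Proof.
move=> t_ge0 t_le1; rewrite /abs_dev !mulr_sumr -big_split /=.
apply: ler_sum => i _; rewrite dotv_segmentl.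
have -> : y i - (dotv w (x i) + t * (dotv v (x i) - dotv w (x i))) =
  (1 - t) * (y i - dotv w (x i)) + t * (y i - dotv v (x i)) by ring.
apply: le_trans (ler_normD _ _) _.
by rewrite !normrM (ger0_norm t_ge0) ger0_norm ?subr_ge0.
Qed.

Lemma primal_opt_variational C w v : 0 <= C -> primal_opt x y C w ->
  C * (abs_dev w - abs_dev v) <= dotv w v - dotv w w.
Proof.
move=> C_ge0 opt; rewrite -subr_ge0.
apply: (@ge0_of_quadratic_ge0 _ _ (2^-1 * dotv (v \- w) (v \- w))) => t t_gt0 t_le1.
set wt := w \+ t \*o (v \- w).
have conv : C * abs_dev wt <= C * ((1 - t) * abs_dev w + t * abs_dev v).
  by rewrite ler_wpM2l // abs_dev_segment_le // ltW.
have opt_t : lad_primal x y C w <= lad_primal x y C wt := opt wt.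
have -> : t * (dotv w v - dotv w w - C * (abs_dev w - abs_dev v))
          + t ^+ 2 * (2^-1 * dotv (v \- w) (v \- w)) =
          (lad_primal x y C wt - lad_primal x y C w)
          + (C * ((1 - t) * abs_dev w + t * abs_dev v) - C * abs_dev wt).
  by rewrite /lad_primal -!/(abs_dev _) dotv_segment; field.
by rewrite addr_ge0 // subr_ge0.
Qed.

Lemma dual_opt_ball C C' w theta : 0 < C -> 0 <= C' ->
  primal_opt x y C w -> dual_opt x y C' theta ->
  normv (C' \*o XT x theta \- ((C' + C) / (2 * C)) \*o w) <=
  `|C' - C| / (2 * C) * normv w.
Proof.
move=> C_gt0 C'_ge0 opt_w opt_theta; set p := XT x theta.
have gap : C * (C' * dotv p p - dotv w p) <= C' * dotv w p - dotv w w.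
  have := primal_opt_variational (C' \*o p) (ltW C_gt0) opt_w.
  have := abs_dev_ge_dual w opt_theta.1; have := abs_dev_dual_opt opt_theta.
  rewrite dotvZr => dev_le dev_ge /(le_trans _); apply.
  by rewrite -/p in dev_le dev_ge; apply: ler_wpM2l; [exact: ltW | lra].
apply: normv_le.
  by rewrite mulr_ge0 ?normv_ge0 // divr_ge0 // mulr_ge0 // ltW.
rewrite exprMn sqr_normv expr_div_n real_normK ?num_real // -subr_le0.
rewrite !(dotvBl, dotvBr, dotvZl, dotvZr) (dotvC p w).
rewrite [X in X <= 0](_ : _ = C' / C *
    (C * (C' * dotv p p - dotv w p) - (C' * dotv w p - dotv w w))); last first.
  by field; rewrite gt_eqF.
by apply: mulr_ge0_le0; [rewrite divr_ge0 // ltW | rewrite subr_le0].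
Qed.

Lemma lad_screening C C' w theta i : 0 < C -> C <= C' ->
  primal_opt x y C w -> dual_opt x y C' theta ->
  ((C' + C) / (2 * C) * dotv w (x i)
     - (C' - C) / (2 * C) * normv w * normv (x i) > y i -> theta i = -1)
  /\
  ((C' + C) / (2 * C) * dotv w (x i)
     + (C' - C) / (2 * C) * normv w * normv (x i) < y i -> theta i = 1).
Proof.
move=> C_gt0 C_le opt_w opt_theta.
have ball := dual_opt_ball C_gt0 (le_trans (ltW C_gt0) C_le) opt_w opt_theta.
rewrite ger0_norm ?subr_ge0 // in ball.
have margin : `|C' * dotv (XT x theta) (x i) - (C' + C) / (2 * C) * dotv w (x i)|
              <= (C' - C) / (2 * C) * normv w * normv (x i).
  rewrite -!dotvZl -dotvBl (le_trans (ler_norm_dotv _ _)) //.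
  by rewrite ler_wpM2r ?normv_ge0.
move/ler_normlP: margin => [lo hi].
split=> bound; [apply: dual_opt_eqN1 opt_theta _ | apply: dual_opt_eq1 opt_theta _]; lra.
Qed.

End LeastAbsoluteDeviations.

Theorem corollary6 (R : realType) (l n : nat)
  (x : 'I_l -> 'I_n -> R) (y : 'I_l -> R)
  (K : nat) (Cs : nat -> R)
  (HC1 : 0 < Cs 1%N)
  (Hinc : forall j : nat, (1 <= j)%N -> (j < K)%N -> Cs j < Cs j.+1)
  (k : nat) (Hk1 : (1 <= k)%N) (HkK : (k < K)%N)
  (w : 'I_n -> R) (Hw : primal_opt x y (Cs k) w)
  (theta : 'I_l -> R) (Htheta : dual_opt x y (Cs k.+1) theta) :
  forall i : 'I_l,
    ((Cs k.+1 + Cs k) / (2 * Cs k) * dotv w (x i)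
       - (Cs k.+1 - Cs k) / (2 * Cs k) * normv w * normv (x i) > y i ->
     theta i = -1)
  /\
    ((Cs k.+1 + Cs k) / (2 * Cs k) * dotv w (x i)
       + (Cs k.+1 - Cs k) / (2 * Cs k) * normv w * normv (x i) < y i ->
     theta i = 1).
Proof.
have C1_le : forall j, (1 <= j <= K)%N -> Cs 1 <= Cs j.
  elim=> [//|[//|j] IH] /andP[_ jK]; apply: le_trans (IH _) (ltW (Hinc _ _ _)) => //.
  by rewrite /= ltnW.
have Ck_gt0 : 0 < Cs k by apply: lt_le_trans HC1 (C1_le k _); rewrite Hk1 ltnW.
by move=> i; apply: lad_screening Hw Htheta; rewrite // ltW // Hinc.
Qed.
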